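(* Let $n\ge2$ and $S=(a_1,\dots,a_n)$ with all $a_i$ positive integers. Define $\bar S=(L/a_1,\dots,L/a_n)$ where $L=\mathrm{lcm}(S)$. Then: (a) $\bar S$ is normal and $\overline{(\bar S)}$ is the normalization of $S$. (b) $J^*(\bar S)=J(S)$ and $J^*(S)=J(\bar S)$. (c) $\mathrm{type}(\bar S)=\mathrm{cotype}(S)$ and $\mathrm{type}(S)=\mathrm{cotype}(\bar S)$.
   Context: For $S=(a_1,\dots,a_n)\in\mathbb{Z}^n$: $S$ is normal if $\gcd(S)=1$; if $S\neq 0$ its normalization is $(a_1/d,\dots,a_n/d)$ with $d=\gcd(S)$. $S_i$ denotes $S$ with the $i$-th entry omitted. $J^*(S)=\{i\in\{1,\dots,n\}:\gcd(S_i)\neq\gcd(S)\}$, $J(S)=\{i:\mathrm{lcm}(S_i)\neq\mathrm{lcm}(S)\}=\{i: a_i\nmid\mathrm{lcm}(S_i)\}$, $\mathrm{type}(S)=|J^*(S)|$, $\mathrm{cotype}(S)=|J(S)|$. By convention gcd and lcm are nonnegative. *)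

From mathcomp Require Import all_boot all_order all_algebra.
Set Implicit Arguments. Unset Strict Implicit. Unset Printing Implicit Defensive.
Import Order.TTheory GRing.Theory Num.Theory.

(* gcd(S), nonnegative; gcd of the empty family is 0 *)
Definition gcdS n (S : 'I_n -> int) : int := \big[gcdz/0%Z]_(i < n) S i.
(* lcm(S), nonnegative; lcm of the empty family is 1 *)
Definition lcmS n (S : 'I_n -> int) : int := \big[lcmz/1%Z]_(i < n) S i.
Definition gcdS_omit n (S : 'I_n -> int) (i : 'I_n) : int :=
  \big[gcdz/0%Z]_(j < n | j != i) S j.
Definition lcmS_omit n (S : 'I_n -> int) (i : 'I_n) : int :=
  \big[lcmz/1%Z]_(j < n | j != i) S j.

Definition is_normal n (S : 'I_n -> int) : Prop := gcdS S = 1%Z.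
Definition normalization n (S : 'I_n -> int) : 'I_n -> int :=
  fun i => (S i %/ gcdS S)%Z.

Definition Jstar n (S : 'I_n -> int) : {set 'I_n} :=
  [set i | gcdS_omit S i != gcdS S].
Definition J n (S : 'I_n -> int) : {set 'I_n} :=
  [set i | lcmS_omit S i != lcmS S].
Definition stype n (S : 'I_n -> int) : nat := #|Jstar S|.
Definition scotype n (S : 'I_n -> int) : nat := #|J S|.

Definition sbar n (S : 'I_n -> int) : 'I_n -> int :=
  fun i => (lcmS S %/ S i)%Z.

From mathcomp Require Import all_boot all_order all_algebra.
From Stdlib Require Import FunctionalExtensionality.
Import Order.TTheory GRing.Theory Num.Theory.

Set Implicit Arguments.
Unset Strict Implicit.

(* On the divisors of L > 0, the map x |-> L/x is an involution that reverses
   divisibility. It therefore exchanges gcds and lcms of nonempty families of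
   divisors: gcd_i (L/a_i) = L/lcm_i a_i and lcm_i (L/a_i) = L/gcd_i a_i.
   Applied to L = lcm(S), with or without the i-th entry, this gives
   gcd(S-bar) = 1, gcd(S-bar_i) = L/lcm(S_i) and lcm(S-bar_i) = L/gcd(S_i);
   since x |-> L/x is injective, the index sets of (b) coincide. *)

Section Cofactors.

Variable L : nat.
Hypothesis L_gt0 : 0 < L.

Lemma cofactorK x : x %| L -> L %/ (L %/ x) = x.
Proof. by move=> xL; rewrite divnA // mulKn. Qed.

Lemma dvdn_cofactor x y : x %| L -> y %| L -> (L %/ x %| L %/ y) = (y %| x).
Proof.
move=> xL yL; have x_gt0 := dvdn_gt0 L_gt0 xL.
have Lx_gt0 : 0 < L %/ x by rewrite divn_gt0 // dvdn_leq.
by rewrite dvdn_divRL // -{2}(divnK xL) dvdn_pmul2l.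
Qed.

Lemma eqn_cofactor x y : x %| L -> y %| L -> (L %/ x == L %/ y) = (x == y).
Proof.
move=> xL yL; apply/eqP/eqP => [Lxy | -> //].
by rewrite -(cofactorK xL) Lxy cofactorK.
Qed.

Lemma cofactor_eq1 x : x %| L -> (L %/ x == 1) = (x == L).
Proof. by move=> xL; rewrite -(eqn_cofactor xL (dvdnn L)) divnn L_gt0. Qed.

Lemma cofactor_divn d x : d %| x -> x %| L -> L %/ d %/ (L %/ x) = x %/ d.
Proof.
move=> dx xL; have x_gt0 := dvdn_gt0 L_gt0 xL.
rewrite divnA // mulnC muln_divCA ?(dvdn_trans dx) // mulKn //.
Qed.

Section BigCofactors.

Variables (I : finType) (P : pred I) (i0 : I).
Hypothesis P_i0 : P i0.

Lemma biggcdn_cofactor (a : I -> nat) : (forall i, P i -> a i %| L) ->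
  \big[gcdn/0]_(i | P i) (L %/ a i) = L %/ \big[lcmn/1]_(i | P i) a i.
Proof.
move=> a_dvd.
set G := \big[gcdn/0]_(i | P i) _; set M := \big[lcmn/1]_(i | P i) _.
have ML : M %| L by apply/dvdn_biglcmP.
have GL : G %| L by apply: (biggcdn_inf i0 P_i0); rewrite dvdn_div ?a_dvd.
apply/eqP; rewrite eqn_dvd; apply/andP; split.
  rewrite -(cofactorK GL) dvdn_cofactor ?dvdn_div //.
  apply/dvdn_biglcmP => i Pi.
  rewrite -(cofactorK (a_dvd i Pi)) dvdn_cofactor ?dvdn_div ?a_dvd //.
  by move/dvdn_biggcdP: (dvdnn G); apply.
apply/dvdn_biggcdP => i Pi; rewrite dvdn_cofactor ?a_dvd //.
exact: (biglcmn_sup i Pi).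
Qed.

Lemma biglcmn_cofactor (a : I -> nat) : (forall i, P i -> a i %| L) ->
  \big[lcmn/1]_(i | P i) (L %/ a i) = L %/ \big[gcdn/0]_(i | P i) a i.
Proof.
move=> a_dvd; have aL_dvd i : P i -> L %/ a i %| L by move/a_dvd/dvdn_div.
have ML : \big[lcmn/1]_(i | P i) (L %/ a i) %| L by apply/dvdn_biglcmP.
rewrite -[LHS]cofactorK // -biggcdn_cofactor //.
by congr (L %/ _); apply: eq_bigr => i /a_dvd/cofactorK.
Qed.

End BigCofactors.
End Cofactors.

Lemma biggcdz_nat (I : finType) (P : pred I) (a : I -> nat) :
  \big[gcdz/0%Z]_(i | P i) Posz (a i) = Posz (\big[gcdn/0]_(i | P i) a i).
Proof. by rewrite (big_morph Posz (id1 := 0%Z) (op1 := gcdz)). Qed.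

Lemma biglcmz_nat (I : finType) (P : pred I) (a : I -> nat) :
  \big[lcmz/1%Z]_(i | P i) Posz (a i) = Posz (\big[lcmn/1]_(i | P i) a i).
Proof. by rewrite (big_morph Posz (id1 := 1%Z) (op1 := lcmz)). Qed.

Lemma exists_neq_ord n (i : 'I_n) : 1 < n -> exists j : 'I_n, j != i.
Proof.
move=> n_gt1; have n_gt0 := ltnW n_gt1.
have [->|] := eqVneq i (Ordinal n_gt0); last by exists (Ordinal n_gt0); rewrite eq_sym.
by exists (Ordinal n_gt1).
Qed.

Section PositiveSequence.

Variables (n : nat) (a : 'I_n -> nat).
Hypotheses (n_gt1 : 1 < n) (a_gt0 : forall i, 0 < a i).

Let S i := Posz (a i).
Let L := \big[lcmn/1]_(i < n) a i.

Let L_gt0 : 0 < L.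
Proof. by apply: (big_ind (fun m => 0 < m)) => // x y; rewrite lcmn_gt0 => -> ->. Qed.

Let a_dvd i : a i %| L.
Proof. exact: (biglcmn_sup i). Qed.

Lemma sbar_nat : sbar S = fun i => Posz (L %/ a i).
Proof.
by apply: functional_extensionality => i; rewrite /sbar /lcmS biglcmz_nat divz_nat.
Qed.

Lemma gcdS_sbar : gcdS (sbar S) = 1%Z.
Proof.
rewrite /gcdS sbar_nat biggcdz_nat.
by rewrite (biggcdn_cofactor L_gt0 (i0 := Ordinal (ltnW n_gt1))) // divnn L_gt0.
Qed.

Lemma sbarK : sbar (sbar S) =1 normalization S.
Proof.
move=> i; rewrite /normalization /gcdS biggcdz_nat divz_nat.
rewrite {1}sbar_nat /sbar /lcmS biglcmz_nat divz_nat.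
rewrite (biglcmn_cofactor L_gt0 (i0 := Ordinal (ltnW n_gt1))) // cofactor_divn //.
exact: (biggcdn_inf i).
Qed.

Lemma Jstar_sbar : Jstar (sbar S) = J S.
Proof.
apply/setP => i; rewrite !inE gcdS_sbar /gcdS_omit /lcmS_omit /lcmS.
rewrite sbar_nat biggcdz_nat !biglcmz_nat !eqz_nat.
have [j j_neq_i] := exists_neq_ord i n_gt1.
rewrite (biggcdn_cofactor L_gt0 (i0 := j)) // cofactor_eq1 //.
by apply/dvdn_biglcmP.
Qed.

Lemma J_sbar : J (sbar S) = Jstar S.
Proof.
apply/setP => i; rewrite !inE /gcdS_omit /lcmS_omit /gcdS /lcmS sbar_nat.
rewrite !biggcdz_nat !biglcmz_nat !eqz_nat.
have [j j_neq_i] := exists_neq_ord i n_gt1.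
rewrite !(biglcmn_cofactor L_gt0 (i0 := j)) // eqn_cofactor //.
  exact: (biggcdn_inf j j_neq_i).
exact: (biggcdn_inf j).
Qed.

End PositiveSequence.

Theorem lemma4p2 (n : nat) (S : 'I_n -> int) :
  (2 <= n)%N -> (forall i, (0 < S i)%R) ->
  [/\ is_normal (sbar S) /\ sbar (sbar S) =1 normalization S,
      Jstar (sbar S) = J S /\ Jstar S = J (sbar S) &
      stype (sbar S) = scotype S /\ stype S = scotype (sbar S)].
Proof.
move=> n_gt1 S_gt0.
have absS_gt0 i : 0 < `|S i|%N by rewrite absz_gt0 gt_eqF.
have -> : S = fun i => Posz `|S i|%N.
  by apply: functional_extensionality => i; rewrite gtz0_abs.
rewrite /is_normal /stype /scotype gcdS_sbar ?Jstar_sbar ?J_sbar //.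
by do 2!split=> //; apply: sbarK.
Qed.
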